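(* (Wireless network localization.) Let $n\ge 1$, let $\phi_{k1},\dots,\phi_{kn}\in\mathbb{R}$ and $\xi_{k1},\dots,\xi_{kn}\ge 0$. For $\mathbf{x}=[x_1,\dots,x_n]^{\mathsf T}\succeq\mathbf{0}$ let $\mathbf{J}_{\mathrm e}(\mathbf{p}_k;\mathbf{x})=\sum_{j=1}^n x_j\,\xi_{kj}\,\mathbf{J}_{\mathrm r}(\phi_{kj})$ and $\mathcal{P}(\mathbf{p}_k;\mathbf{x})=\operatorname{tr}\{\mathbf{J}_{\mathrm e}^{-1}(\mathbf{p}_k;\mathbf{x})\}$. Then $\mathcal{P}(\mathbf{p}_k;\mathbf{x})$ is a convex function of $\mathbf{x}\succeq\mathbf{0}$, and whenever $\mathbf{J}_{\mathrm e}(\mathbf{p}_k;\mathbf{x})$ is invertible, $$\mathcal{P}(\mathbf{p}_k;\mathbf{x})=\frac{4\cdot\mathbf{1}^{\mathsf T}\mathbf{R}_k\mathbf{x}}{\mathbf{x}^{\mathsf T}\mathbf{R}_k^{\mathsf T}\boldsymbol{\Lambda}_k\mathbf{R}_k\mathbf{x}},$$ where $\mathbf{R}_k=\operatorname{diag}\{\xi_{k1},\dots,\xi_{kn}\}$ and $\boldsymbol{\Lambda}_k$ is the symmetric matrix of rank at most $3$ given by $$\boldsymbol{\Lambda}_k=\mathbf{1}\mathbf{1}^{\mathsf T}-\mathbf{c}(2\boldsymbol{\phi}_k)\mathbf{c}(2\boldsymbol{\phi}_k)^{\mathsf T}-\mathbf{s}(2\boldsymbol{\phi}_k)\mathbf{s}(2\boldsymbol{\phi}_k)^{\mathsf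 T},\qquad \boldsymbol{\phi}_k=[\phi_{k1},\dots,\phi_{kn}]^{\mathsf T}.$$ (Radar network localization.) Let $N_t,N_r\ge1$, let $\phi_{kj}\in\mathbb{R}$ and $\xi_{kj}\ge 0$ for $k=1,\dots,N_r$, $j=1,\dots,N_t$. For $\mathbf{x}\in\mathbb{R}^{N_t}$, $\mathbf{x}\succeq\mathbf{0}$, let $\mathbf{J}_{\mathrm e}(\mathbf{p}_0;\mathbf{x})=\sum_{j=1}^{N_t}\sum_{k=1}^{N_r}x_j\,\xi_{kj}\,\mathbf{J}_{\mathrm r}(\phi_{kj})$ and $\mathcal{P}(\mathbf{p}_0;\mathbf{x})=\operatorname{tr}\{\mathbf{J}_{\mathrm e}^{-1}(\mathbf{p}_0;\mathbf{x})\}$. Then $\mathcal{P}(\mathbf{p}_0;\mathbf{x})$ is a convex function of $\mathbf{x}\succeq\mathbf{0}$, and whenever $\mathbf{J}_{\mathrm e}(\mathbf{p}_0;\mathbf{x})$ is invertible, $$\mathcal{P}(\mathbf{p}_0;\mathbf{x})=\frac{4\cdot\mathbf{1}^{\mathsf T}\mathbf{R}\mathbf{x}}{\mathbf{x}^{\mathsf T}\mathbf{R}^{\mathsf T}\boldsymbol{\Lambda}\mathbf{R}\mathbf{x}},$$ where $\mathbf{R}=[\mathbf{R}_1^{\mathsf T}\ \mathbf{R}_2^{\mathsf T}\ \cdots\ \mathbf{R}_{N_r}^{\mathsf T}]^{\mathsf T}\in\mathbb{R}^{N_rN_t\times N_t}$ with $\mathbf{R}_k=\operatorname{diag}\{\xi_{k1},\dots,\xi_{kN_t}\}$,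 and $\boldsymbol{\Lambda}$ is the symmetric matrix of rank at most $3$ given by $\boldsymbol{\Lambda}=\mathbf{1}\mathbf{1}^{\mathsf T}-\mathbf{c}(2\boldsymbol{\phi})\mathbf{c}(2\boldsymbol{\phi})^{\mathsf T}-\mathbf{s}(2\boldsymbol{\phi})\mathbf{s}(2\boldsymbol{\phi})^{\mathsf T}$ with $\boldsymbol{\phi}=[\boldsymbol{\phi}_1^{\mathsf T}\ \cdots\ \boldsymbol{\phi}_{N_r}^{\mathsf T}]^{\mathsf T}$, $\boldsymbol{\phi}_k=[\phi_{k1},\dots,\phi_{kN_t}]^{\mathsf T}$.
   Context: Notation: $\mathbf{u}(\phi)=[\cos\phi\ \ \sin\phi]^{\mathsf T}$, $\mathbf{J}_{\mathrm r}(\phi)=\mathbf{u}(\phi)\mathbf{u}(\phi)^{\mathsf T}$; for $\boldsymbol\phi=[\phi_1,\dots,\phi_m]^{\mathsf T}$, $\mathbf{c}(\boldsymbol\phi)=[\cos\phi_1,\dots,\cos\phi_m]^{\mathsf T}$ and $\mathbf{s}(\boldsymbol\phi)=[\sin\phi_1,\dots,\sin\phi_m]^{\mathsf T}$; $\mathbf{1}$ is the all-ones vector of appropriate dimension; $\mathbf{x}\succeq\mathbf{0}$ means entrywise nonnegative. $\mathbf{x}$ is the power allocation vector, $\xi$'s are the equivalent ranging coefficients, and $\mathcal{P}$ is the squared position error bound (SPEB); the SPEB is regarded as $+\infty$ when the matrix $\mathbf{J}_{\mathrm e}$ is singular. *)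

From HB Require Import structures.
From mathcomp Require Import all_boot all_order all_algebra.
From mathcomp Require Import all_classical all_reals all_analysis.
Set Implicit Arguments. Unset Strict Implicit. Unset Printing Implicit Defensive.
Import Order.TTheory GRing.Theory Num.Theory.
Local Open Scope ring_scope.

Section Defs.
Variable R : realType.

Definition uvec (phi : R) : 'cV[R]_2 :=
  \col_(i < 2) (if i == 0 then cos phi else sin phi).

Definition Jr (phi : R) : 'M[R]_2 := uvec phi *m (uvec phi)^T.

Definition nonneg_vec m (x : 'cV[R]_m) : Prop := forall i, 0 <= x i 0.

Definition speb (J : 'M[R]_2) : \bar R :=
  if J \in unitmx then ((\tr (invmx J))%:E)%E else (+oo)%E.

Definition convex_on_nonneg m (f : 'cV[R]_m -> \bar R) : Prop :=
  forall (x y : 'cV[R]_m) (t : R), nonneg_vec x -> nonneg_vec y ->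
    0 <= t -> t <= 1 ->
    (f (t *: x + (1 - t) *: y)%R <= t%:E * f x + (1 - t)%:E * f y)%E.

Definition ones m : 'cV[R]_m := const_mx 1.
Definition cvec m (phi : 'cV[R]_m) : 'cV[R]_m := map_mx cos phi.
Definition svec m (phi : 'cV[R]_m) : 'cV[R]_m := map_mx sin phi.

Definition Lambda m (phi : 'cV[R]_m) : 'M[R]_m :=
  ones m *m (ones m)^T
  - cvec (2 *: phi) *m (cvec (2 *: phi))^T
  - svec (2 *: phi) *m (svec (2 *: phi))^T.

Definition Rdiag m (xi : 'cV[R]_m) : 'M[R]_m := diag_mx xi^T.

Definition Je_wireless n (phi xi x : 'cV[R]_n) : 'M[R]_2 :=
  \sum_(j < n) (x j 0 * xi j 0) *: Jr (phi j 0).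

Definition Je_radar Nr Nt (phi xi : 'I_Nr -> 'cV[R]_Nt) (x : 'cV[R]_Nt)
  : 'M[R]_2 :=
  \sum_(j < Nt) \sum_(k < Nr) (x j 0 * xi k j 0) *: Jr (phi k j 0).

Definition Rstack Nr Nt (xi : 'I_Nr -> 'cV[R]_Nt) :
  'M[R]_(\sum_(k < Nr) Nt, Nt) := \mxcol_(k < Nr) Rdiag (xi k).
Definition phistack Nr Nt (phi : 'I_Nr -> 'cV[R]_Nt) :
  'cV[R]_(\sum_(k < Nr) Nt) := \mxcol_(k < Nr) phi k.

Definition speb_formula p q (A : 'M[R]_(p, q)) (L : 'M[R]_p) (x : 'cV[R]_q) : R :=
  4 * ((ones p)^T *m A *m x) 0 0 / ((x^T *m A^T *m L *m A *m x) 0 0).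

End Defs.

From HB Require Import structures.
From mathcomp Require Import all_boot all_order all_algebra.
From mathcomp Require Import all_classical all_reals all_analysis.
From mathcomp Require Import ring lra.
Import Order.TTheory GRing.Theory Num.Theory.
Local Open Scope ring_scope.
Set Implicit Arguments. Unset Strict Implicit.

(* Both information matrices have the form J(w) = sum_i w_i J_r(phi_i) with a
   weight vector w = A x that is linear in x and nonnegative for x >= 0, so J is
   a positive semidefinite 2x2 matrix depending linearly on x.  For 2x2 matrices
   tr J^-1 = tr J / det J, and since 2 J_r(phi) = I + [[cos 2phi, sin 2phi],
   [sin 2phi, -cos 2phi]] we get tr J = 1^T w and
   4 det J = (1^T w)^2 - (c(2phi)^T w)^2 - (s(2phi)^T w)^2 = w^T Lambda w.
   Convexity: on positive definite [[a, b], [b, c]] the map (a + c) / (a c - b^2)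
   is a supremum of affine functions; if one end point of a segment is singular
   the right-hand side of the convexity inequality is +oo. *)

Section Mx2.
Variable R : comPzRingType.

Lemma det_mx2 (A : 'M[R]_2) : \det A = A 0 0 * A 1 1 - A 0 1 * A 1 0.
Proof.
rewrite (expand_det_row _ 0) !big_ord_recl big_ord0 /cofactor !det_mx11 !mxE /=.
have -> : lift (0 : 'I_2) (0 : 'I_1) = 1 by apply/val_inj.
have -> : lift (1 : 'I_2) (0 : 'I_1) = 0 by apply/val_inj.
have -> : (ord0 : 'I_2) = 0 by apply/val_inj.
rewrite /bump /= expr0 expr1; ring.
Qed.

Lemma mxtrace2 (A : 'M[R]_2) : \tr A = A 0 0 + A 1 1.
Proof.
by rewrite /mxtrace !big_ord_recl big_ord0 addr0; congr (_ + A _ _); apply/val_inj.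
Qed.

Lemma mxtrace_adj2 (A : 'M[R]_2) : \tr (\adj A) = \tr A.
Proof.
rewrite !mxtrace2 !mxE /cofactor !det_mx11 !mxE /=.
have -> : lift (0 : 'I_2) (0 : 'I_1) = 1 by apply/val_inj.
have -> : lift (1 : 'I_2) (0 : 'I_1) = 0 by apply/val_inj.
by rewrite /bump /= expr0 (_ : (1 + 0 + (1 + 0))%N = 2%N) // expr2 mulN1r opprK !mul1r addrC.
Qed.

End Mx2.

Lemma mxtrace_invmx2 (F : fieldType) (A : 'M[F]_2) :
  A \in unitmx -> \tr (invmx A) = \tr A / \det A.
Proof. by move=> uA; rewrite /invmx uA mxtraceZ mxtrace_adj2 mulrC. Qed.

Section BinaryQuadraticForms.
Variable R : realFieldType.
Implicit Types a b c t : R.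

Definition quad2 a b c z1 z2 := a * z1 ^+ 2 + 2 * b * z1 * z2 + c * z2 ^+ 2.

Lemma quad2_ge0 a b c z1 z2 :
  0 < a -> 0 < a * c - b ^+ 2 -> 0 <= quad2 a b c z1 z2.
Proof.
move=> a_gt0 D_gt0.
have quad2_sqr : a * quad2 a b c z1 z2
    = (a * z1 + b * z2) ^+ 2 + (a * c - b ^+ 2) * z2 ^+ 2 by rewrite /quad2; ring.
rewrite -(pmulr_rge0 _ a_gt0) quad2_sqr.
by rewrite addr_ge0 ?sqr_ge0 // mulr_ge0 ?sqr_ge0 // ltW.
Qed.

Lemma quad2_psd_pd a b c :
  (forall z1 z2, 0 <= quad2 a b c z1 z2) -> a * c - b ^+ 2 != 0 ->
  0 < a /\ 0 < a * c - b ^+ 2.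
Proof.
move=> psd D_neq0.
have a_ge0 : 0 <= a by have := psd 1 0; rewrite /quad2; lra.
have [a0|a_neq0] := eqVneq a 0.
  (* with [a = 0] the form is affine in [z1] along [z2 = 1], hence not bounded below *)
  have b_neq0 : b != 0 by move: D_neq0; rewrite a0 mul0r sub0r oppr_eq0 sqrf_eq0.
  have := psd (- (c + 1) / (2 * b)) 1.
  rewrite /quad2 a0 mul0r add0r expr1n mulr1.
  have -> : 2 * b * (- (c + 1) / (2 * b)) = - (c + 1) by field.
  lra.
have a_gt0 : 0 < a by rewrite lt_def a_neq0.
split=> //; have := psd (- b) a.
have -> : quad2 a b c (- b) a = a * (a * c - b ^+ 2) by rewrite /quad2; ring.
by rewrite pmulr_rge0 // le_eqVlt eq_sym (negPf D_neq0).
Qed.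

Lemma quad2_pd_conv t a b c a' b' c' : 0 < t -> t < 1 ->
  0 < a -> 0 < a * c - b ^+ 2 -> 0 < a' -> 0 < a' * c' - b' ^+ 2 ->
  0 < (t * a + (1 - t) * a') * (t * c + (1 - t) * c') - (t * b + (1 - t) * b') ^+ 2.
Proof.
move=> t_gt0 t_lt1 a_gt0 D_gt0 a'_gt0 D'_gt0.
set X := a * c' + a' * c - 2 * b * b'.
have X_ge0 : 0 <= X.
  have aa'X : a * a' * X = a ^+ 2 * (a' * c' - b' ^+ 2)
      + a' ^+ 2 * (a * c - b ^+ 2) + (a * b' - a' * b) ^+ 2 by rewrite /X; ring.
  rewrite -(pmulr_rge0 _ (mulr_gt0 a_gt0 a'_gt0)) aa'X.
  by rewrite !addr_ge0 ?sqr_ge0 // mulr_ge0 ?sqr_ge0 // ltW.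
have -> : (t * a + (1 - t) * a') * (t * c + (1 - t) * c') - (t * b + (1 - t) * b') ^+ 2
  = t ^+ 2 * (a * c - b ^+ 2) + (1 - t) ^+ 2 * (a' * c' - b' ^+ 2) + t * (1 - t) * X.
  by rewrite /X; ring.
have t'_gt0 : 0 < 1 - t by lra.
apply: ltr_wpDr; first by rewrite !mulr_ge0 // ltW.
by rewrite addr_gt0 // mulr_gt0 // exprn_gt0.
Qed.

(* With [Y = [[z1, y1], [z2, y2]]] and [J = [[a, b], [b, c]]] this is
   [2 tr Y - tr (Y^T J Y)], affine in [J]; its maximum over [Y], attained at
   [Y = J^-1], is [tr J^-1 = (a + c) / (a c - b^2)]. *)
Definition inv_trace_minorant a b c z1 z2 y1 y2 :=
  2 * z1 - quad2 a b c z1 z2 + (2 * y2 - quad2 a b c y1 y2).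

Lemma inv_trace_minorant_le a b c z1 z2 y1 y2 : 0 < a -> 0 < a * c - b ^+ 2 ->
  inv_trace_minorant a b c z1 z2 y1 y2 <= (a + c) / (a * c - b ^+ 2).
Proof.
move=> a_gt0 D_gt0; set D := a * c - b ^+ 2.
have D_neq0 : D != 0 by rewrite gt_eqF.
have gap : (a + c) / D - inv_trace_minorant a b c z1 z2 y1 y2 =
    quad2 a b c (z1 - c / D) (z2 + b / D) + quad2 a b c (y1 + b / D) (y2 - a / D).
  by rewrite /inv_trace_minorant /quad2 /D; field; rewrite -/D.
by rewrite -subr_ge0 gap addr_ge0 // quad2_ge0.
Qed.

Lemma inv_trace_minorant_max a b c : a * c - b ^+ 2 != 0 ->
  let D := a * c - b ^+ 2 in
  inv_trace_minorant a b c (c / D) (- b / D) (- b / D) (a / D) = (a + c) / D.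
Proof. by move=> D_neq0 D; rewrite /inv_trace_minorant /quad2 /D; field. Qed.

Lemma inv_trace_minorant_conv t a b c a' b' c' z1 z2 y1 y2 :
  inv_trace_minorant (t * a + (1 - t) * a') (t * b + (1 - t) * b')
    (t * c + (1 - t) * c') z1 z2 y1 y2
  = t * inv_trace_minorant a b c z1 z2 y1 y2
    + (1 - t) * inv_trace_minorant a' b' c' z1 z2 y1 y2.
Proof. by rewrite /inv_trace_minorant /quad2; ring. Qed.

Lemma inv_trace2_conv t a b c a' b' c' : 0 < t -> t < 1 ->
  0 < a -> 0 < a * c - b ^+ 2 -> 0 < a' -> 0 < a' * c' - b' ^+ 2 ->
  ((t * a + (1 - t) * a') + (t * c + (1 - t) * c')) /
  ((t * a + (1 - t) * a') * (t * c + (1 - t) * c') - (t * b + (1 - t) * b') ^+ 2)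
  <= t * ((a + c) / (a * c - b ^+ 2)) + (1 - t) * ((a' + c') / (a' * c' - b' ^+ 2)).
Proof.
move=> t_gt0 t_lt1 a_gt0 D_gt0 a'_gt0 D'_gt0.
have D_gt0_conv := quad2_pd_conv t_gt0 t_lt1 a_gt0 D_gt0 a'_gt0 D'_gt0.
rewrite -(inv_trace_minorant_max (lt0r_neq0 D_gt0_conv)) inv_trace_minorant_conv.
have t'_gt0 : 0 < 1 - t by lra.
by apply: lerD; apply: ler_wpM2l; (exact: ltW) || exact: inv_trace_minorant_le.
Qed.

End BinaryQuadraticForms.

Lemma mxrank_outer (F : fieldType) p (u : 'cV[F]_p) : (\rank (u *m u^T) <= 1)%N.
Proof. exact: leq_trans (mxrankM_maxl _ _) (rank_leq_col _). Qed.

Lemma sum_mxcol (R : pzRingType) Nr Nt (v u : 'I_Nr -> 'cV[R]_Nt) (f : R -> R) :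
  \sum_i (\mxcol_k v k) i 0 * f ((\mxcol_k u k) i 0) = \sum_k \sum_j v k j 0 * f (u k j 0).
Proof.
have -> : \sum_i (\mxcol_k v k) i 0 * f ((\mxcol_k u k) i 0)
    = ((\mxcol_k v k)^T *m \mxcol_k map_mx f (u k)) 0 0.
  by rewrite mxE; apply: eq_bigr => i _; rewrite !mxE.
rewrite tr_mxcol mul_mxrow_mxcol summxE; apply: eq_bigr => k _.
by rewrite mxE; apply: eq_bigr => j _; rewrite !mxE.
Qed.

Section SPEB.
Variable R : realType.

Definition psd2 (M : 'M[R]_2) :=
  M 0 1 = M 1 0 /\ forall z1 z2, 0 <= quad2 (M 0 0) (M 0 1) (M 1 1) z1 z2.

Lemma psd2_add (A B : 'M[R]_2) : psd2 A -> psd2 B -> psd2 (A + B).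
Proof.
move=> [symA psdA] [symB psdB]; split=> [|z1 z2]; rewrite !mxE; first by rewrite symA symB.
have -> : quad2 (A 0 0 + B 0 0) (A 0 1 + B 0 1) (A 1 1 + B 1 1) z1 z2 =
  quad2 (A 0 0) (A 0 1) (A 1 1) z1 z2 + quad2 (B 0 0) (B 0 1) (B 1 1) z1 z2.
  by rewrite /quad2; ring.
exact: addr_ge0.
Qed.

Lemma psd2Z (k : R) (A : 'M[R]_2) : 0 <= k -> psd2 A -> psd2 (k *: A).
Proof.
move=> k_ge0 [symA psdA]; split=> [|z1 z2]; rewrite !mxE; first by rewrite symA.
have -> : quad2 (k * A 0 0) (k * A 0 1) (k * A 1 1) z1 z2 =
  k * quad2 (A 0 0) (A 0 1) (A 1 1) z1 z2 by rewrite /quad2; ring.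
exact: mulr_ge0.
Qed.

Lemma psd2_sum (I : finType) (F : I -> 'M[R]_2) :
  (forall i, psd2 (F i)) -> psd2 (\sum_i F i).
Proof.
move=> psdF; elim/big_ind: _ => //; last exact: psd2_add.
by split=> [|z1 z2]; rewrite !mxE // /quad2; lra.
Qed.

Lemma speb_nonunit (M : 'M[R]_2) : M \notin unitmx -> speb M = +oo%E.
Proof. by rewrite /speb => /negPf ->. Qed.

Lemma speb_unit (M : 'M[R]_2) : M \in unitmx -> speb M = (\tr M / \det M)%:E.
Proof. by move=> uM; rewrite /speb uM mxtrace_invmx2. Qed.

Lemma det_psd2 (M : 'M[R]_2) : psd2 M -> \det M = M 0 0 * M 1 1 - M 0 1 ^+ 2.
Proof. by case=> symM _; rewrite det_mx2 symM expr2. Qed.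

Lemma speb_scale_neqNy (k : R) (M : 'M[R]_2) : 0 < k -> (k%:E * speb M != -oo)%E.
Proof.
by move=> k_gt0; rewrite /speb; case: ifP => _; rewrite ?gt0_muley -?EFinM.
Qed.

Lemma psd2_unit_pd (M : 'M[R]_2) : psd2 M -> M \in unitmx ->
  0 < M 0 0 /\ 0 < M 0 0 * M 1 1 - M 0 1 ^+ 2.
Proof.
move=> psdM uM; apply: quad2_psd_pd psdM.2 _.
by rewrite -det_psd2 // -unitfE -unitmxE.
Qed.

Lemma speb_conv_psd2 (A B : 'M[R]_2) (t : R) :
  psd2 A -> psd2 B -> 0 <= t -> t <= 1 ->
  (speb (t *: A + (1 - t) *: B) <= t%:E * speb A + (1 - t)%:E * speb B)%E.
Proof.
move=> psdA psdB t_ge0 t_le1.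
have [->|t_neq0] := eqVneq t 0.
  by rewrite scale0r add0r subr0 scale1r mul0e add0e mul1e.
have [->|t_neq1] := eqVneq t 1.
  by rewrite scale1r subrr scale0r addr0 mul0e adde0 mul1e.
have t_gt0 : 0 < t by rewrite lt_def t_neq0.
have t_lt1 : t < 1 by rewrite lt_def eq_sym t_neq1.
have t'_gt0 : 0 < 1 - t by lra.
have [uA|nuA] := boolP (A \in unitmx); last first.
  by rewrite [speb A]speb_nonunit // gt0_muley ?lte_fin // addye ?leey ?speb_scale_neqNy.
have [uB|nuB] := boolP (B \in unitmx); last first.
  by rewrite [speb B]speb_nonunit // gt0_muley ?lte_fin // addey ?leey ?speb_scale_neqNy.
have psdM : psd2 (t *: A + (1 - t) *: B) by apply: psd2_add; apply: psd2Z; rewrite ?ltW.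
have [a_gt0 D_gt0] := psd2_unit_pd psdA uA.
have [a'_gt0 D'_gt0] := psd2_unit_pd psdB uB.
have D_gt0_conv := quad2_pd_conv t_gt0 t_lt1 a_gt0 D_gt0 a'_gt0 D'_gt0.
have uM : t *: A + (1 - t) *: B \in unitmx.
  by rewrite unitmxE unitfE det_psd2 // !mxE gt_eqF.
rewrite !speb_unit // -!EFinM -EFinD lee_fin !det_psd2 // !mxtrace2 !mxE.
exact: inv_trace2_conv.
Qed.

End SPEB.

Section FisherInformation.
Variable R : realType.

Lemma JrE (phi : R) i j : Jr phi i j =
  (if i == 0 then cos phi else sin phi) * (if j == 0 then cos phi else sin phi).
Proof. by rewrite /Jr !mxE big_ord1 !mxE. Qed.

Lemma psd2_Jr (phi : R) : psd2 (Jr phi).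
Proof.
split=> [|z1 z2]; rewrite !JrE /=; first by rewrite mulrC.
have -> : quad2 (cos phi * cos phi) (cos phi * sin phi) (sin phi * sin phi) z1 z2 =
  (cos phi * z1 + sin phi * z2) ^+ 2 by rewrite /quad2; ring.
exact: sqr_ge0.
Qed.

Definition Jsum p (w phi : 'cV[R]_p) : 'M[R]_2 := \sum_i w i 0 *: Jr (phi i 0).

Lemma JsumE p (w phi : 'cV[R]_p) a b :
  Jsum w phi a b = \sum_i w i 0 * Jr (phi i 0) a b.
Proof. by rewrite summxE; apply: eq_bigr => i _; rewrite mxE. Qed.

Lemma Jsum_conv p (w w' phi : 'cV[R]_p) t :
  Jsum (t *: w + (1 - t) *: w') phi = t *: Jsum w phi + (1 - t) *: Jsum w' phi.
Proof.
rewrite /Jsum !scaler_sumr -big_split; apply: eq_bigr => i _ /=.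
by rewrite !mxE !scalerA -scalerDl.
Qed.

Lemma psd2_Jsum p (w phi : 'cV[R]_p) : nonneg_vec w -> psd2 (Jsum w phi).
Proof. by move=> w_ge0; apply: psd2_sum => i; apply: psd2Z (psd2_Jr _). Qed.

Lemma mxBE m n (A B : 'M[R]_(m, n)) i j : (A - B) i j = A i j - B i j.
Proof. by rewrite !mxE. Qed.

Lemma quad_form_rank1 p (u w : 'cV[R]_p) :
  (w^T *m (u *m u^T) *m w) 0 0 = (\sum_i w i 0 * u i 0) ^+ 2.
Proof.
rewrite !mulmxA -mulmxA mxE big_ord1 expr2 !mxE.
by congr (_ * _); apply: eq_bigr => i _; rewrite !mxE // mulrC.
Qed.

Lemma Jsum_sym p (w phi : 'cV[R]_p) : Jsum w phi 1 0 = Jsum w phi 0 1.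
Proof. by rewrite !JsumE; apply: eq_bigr => i _; rewrite !JrE /= [sin _ * _]mulrC. Qed.

Lemma ones_dot_Jsum p (w phi : 'cV[R]_p) : ((ones R p)^T *m w) 0 0 = \tr (Jsum w phi).
Proof.
rewrite mxtrace2 !JsumE -big_split mxE; apply: eq_bigr => i _.
by rewrite !JrE !mxE /= mul1r -mulrDr -!expr2 cos2Dsin2 mulr1.
Qed.

Lemma Lambda_quad_Jsum p (w phi : 'cV[R]_p) :
  (w^T *m Lambda phi *m w) 0 0 = 4 * \det (Jsum w phi).
Proof.
rewrite /Lambda !mulmxBr !mulmxBl !mxBE !quad_form_rank1.
have -> : \sum_i w i 0 * ones R p i 0 = \tr (Jsum w phi).
  by rewrite -(ones_dot_Jsum w) mxE; apply: eq_bigr => i _; rewrite !mxE mulrC.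
have -> : \sum_i w i 0 * cvec (2 *: phi) i 0 = Jsum w phi 0 0 - Jsum w phi 1 1.
  rewrite !JsumE -sumrB; apply: eq_bigr => i _.
  by rewrite !JrE !mxE /= mulr_natl mulr2n cosD -mulrBr.
have -> : \sum_i w i 0 * svec (2 *: phi) i 0 = 2 * Jsum w phi 0 1.
  rewrite JsumE mulr_sumr; apply: eq_bigr => i _.
  by rewrite !JrE !mxE /= mulr_natl mulr2n sinD; ring.
by rewrite mxtrace2 det_mx2 Jsum_sym; ring.
Qed.

Lemma speb_Jsum p (w phi : 'cV[R]_p) : Jsum w phi \in unitmx ->
  speb (Jsum w phi) = (4 * ((ones R p)^T *m w) 0 0 / (w^T *m Lambda phi *m w) 0 0)%:E.
Proof.
move=> uJ; rewrite speb_unit // (ones_dot_Jsum _ phi) Lambda_quad_Jsum.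
by congr _%:E; field; rewrite -unitfE -unitmxE.
Qed.

Lemma Lambda_sym p (phi : 'cV[R]_p) : (Lambda phi)^T = Lambda phi.
Proof. by rewrite /Lambda !linearB /= !trmx_mul !trmxK. Qed.

Lemma Lambda_rank p (phi : 'cV[R]_p) : (\rank (Lambda phi) <= 3)%N.
Proof.
rewrite /Lambda; apply: leq_trans (mxrank_add _ _) _; rewrite mxrank_opp.
apply: leq_trans (leq_add (mxrank_add _ _) (leqnn _)) _; rewrite mxrank_opp -addnA.
exact: leq_add (mxrank_outer _) (leq_add (mxrank_outer _) (mxrank_outer _)).
Qed.

Lemma speb_linear_weights p q (A : 'M[R]_(p, q)) (phi : 'cV[R]_p)
    (Je : 'cV[R]_q -> 'M[R]_2) :
  (forall x, Je x = Jsum (A *m x) phi) ->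
  (forall x, nonneg_vec x -> nonneg_vec (A *m x)) ->
  convex_on_nonneg (fun x => speb (Je x)) /\ (Lambda phi)^T = Lambda phi /\
  (\rank (Lambda phi) <= 3)%N /\
  (forall x, nonneg_vec x -> Je x \in unitmx ->
     speb (Je x) = (speb_formula A (Lambda phi) x)%:E).
Proof.
move=> JeE A_ge0; split.
  move=> x y t x_ge0 y_ge0 t_ge0 t_le1.
  rewrite !JeE mulmxDr -!scalemxAr Jsum_conv.
  by apply: speb_conv_psd2 => //; apply/psd2_Jsum/A_ge0.
split; first exact: Lambda_sym.
split; first exact: Lambda_rank.
by move=> x _; rewrite JeE => uJ; rewrite speb_Jsum // /speb_formula trmx_mul !mulmxA.
Qed.

End FisherInformation.

Section Networks.
Variable R : realType.

Lemma Rdiag_mulmxE n (xi x : 'cV[R]_n) i : (Rdiag xi *m x) i 0 = xi i 0 * x i 0.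
Proof. by rewrite /Rdiag mul_diag_mx !mxE. Qed.

Lemma Je_wireless_Jsum n (phi xi x : 'cV[R]_n) :
  Je_wireless phi xi x = Jsum (Rdiag xi *m x) phi.
Proof. by apply: eq_bigr => j _; rewrite Rdiag_mulmxE mulrC. Qed.

Lemma nonneg_Rdiag_mulmx n (xi x : 'cV[R]_n) :
  (forall j, 0 <= xi j 0) -> nonneg_vec x -> nonneg_vec (Rdiag xi *m x).
Proof. by move=> xi_ge0 x_ge0 j; rewrite Rdiag_mulmxE mulr_ge0. Qed.

Lemma Je_radar_Jsum Nr Nt (phi xi : 'I_Nr -> 'cV[R]_Nt) (x : 'cV[R]_Nt) :
  Je_radar phi xi x = Jsum (Rstack xi *m x) (phistack phi).
Proof.
apply/matrixP => a b; rewrite JsumE /Rstack mxcol_mul /phistack.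
rewrite (sum_mxcol _ _ (fun t => Jr t a b)) summxE exchange_big /=.
apply: eq_bigr => j _; rewrite summxE; apply: eq_bigr => k _.
by rewrite [LHS]mxE Rdiag_mulmxE (mulrC (x j 0)).
Qed.

Lemma nonneg_Rstack_mulmx Nr Nt (xi : 'I_Nr -> 'cV[R]_Nt) (x : 'cV[R]_Nt) :
  (forall k j, 0 <= xi k j 0) -> nonneg_vec x -> nonneg_vec (Rstack xi *m x).
Proof.
by move=> xi_ge0 x_ge0 i; rewrite /Rstack mxcol_mul mxE Rdiag_mulmxE mulr_ge0.
Qed.

End Networks.

Theorem lemma1 (R : realType) :
  (* wireless network localization *)
  (forall (n : nat) (phi xi : 'cV[R]_n),
     (1 <= n)%N -> (forall j, 0 <= xi j 0) ->
     convex_on_nonneg (fun x => speb (Je_wireless phi xi x)) /\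
     (Lambda phi)^T = Lambda phi /\ (\rank (Lambda phi) <= 3)%N /\
     (forall x : 'cV[R]_n, nonneg_vec x -> Je_wireless phi xi x \in unitmx ->
        speb (Je_wireless phi xi x)
        = (speb_formula (Rdiag xi) (Lambda phi) x)%:E)) /\
  (* radar network localization *)
  (forall (Nt Nr : nat) (phi xi : 'I_Nr -> 'cV[R]_Nt),
     (1 <= Nt)%N -> (1 <= Nr)%N -> (forall k j, 0 <= xi k j 0) ->
     convex_on_nonneg (fun x => speb (Je_radar phi xi x)) /\
     (Lambda (phistack phi))^T = Lambda (phistack phi) /\
     (\rank (Lambda (phistack phi)) <= 3)%N /\
     (forall x : 'cV[R]_Nt, nonneg_vec x -> Je_radar phi xi x \in unitmx ->
        speb (Je_radar phi xi x)
        = (speb_formula (Rstack xi) (Lambda (phistack phi)) x)%:E)).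
Proof.
split=> [n phi xi _ xi_ge0 | Nt Nr phi xi _ _ xi_ge0].
  apply: speb_linear_weights; first exact: Je_wireless_Jsum.
  by move=> x; apply: nonneg_Rdiag_mulmx.
apply: speb_linear_weights; first exact: Je_radar_Jsum.
by move=> x; apply: nonneg_Rstack_mulmx.
Qed.
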